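(* Let $d\ge 3$ be odd, $n=\frac{d^2+1}{2}$, and consider the $[[d^2+1,2,d]]$ generalized bicycle code defined by $a(x)=1+x$, $b(x)=1+x^d$ in $R_n$. Let $O$ be the permutation of the $2n$ data qubits given on $\mathbb{F}_2^{2n}$ by $O\big((p(x),q(x))\big)=(x\,q(x^d),\,p(x^d))$ (the composition $\Pi_{1,0}E_dS$ of the swap $S:(p,q)\mapsto(q,p)$, the map $E_d:(p,q)\mapsto(p(x^d),q(x^d))$, and $\Pi_{1,0}:(p,q)\mapsto(xp,q)$), acting on Pauli operators by permuting tensor factors. Then applying $O$ implements a logical CNOT gate between the two logical qubits (with respect to a suitable choice of logical basis).
   Context: $R_n=\mathbb{F}_2[x]/\langle x^n-1\rangle$; the $2n$ qubits are labelled by the coefficients of pairs $(p(x),q(x))$ of elements of $R_n$. The generalized bicycle code defined by $a,b$ is the CSS code whose X-stabilizer group is generated by X-type Paulis on the vectors $x^i(a(x),b(x))$ and whose Z-stabilizer group is generated by Z-type Paulis on $x^i(b(x^{-1}),a(x^{-1}))$, $0\le i\le n-1$, $x^{-1}=x^{n-1}$. *)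

(* Elements of R_n = F_2[x]/<x^n-1> are represented by
   polynomials over 'F_2, always read modulo x^n - 1 (via [redp]). *)
From HB Require Import structures.
From mathcomp Require Import all_boot all_algebra.
Set Implicit Arguments. Unset Strict Implicit. Unset Printing Implicit Defensive.
Import GRing.Theory.
Local Open Scope ring_scope.

(* a vector of F_2^{2n}, i.e. a pair (p(x), q(x)) of elements of R_n *)
Definition pvec := ({poly 'F_2} * {poly 'F_2})%type.

Definition redp (n : nat) (p : {poly 'F_2}) : {poly 'F_2} := p %% ('X^n - 1).

Definition subst_pow (n k : nat) (p : {poly 'F_2}) : {poly 'F_2} :=
  redp n (p \Po 'X^k).

(* p(x) |-> p(x^{-1}), with x^{-1} = x^{n-1} *)
Definition xinv (n : nat) (p : {poly 'F_2}) : {poly 'F_2} := subst_pow n n.-1 p.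

Definition vadd (u v : pvec) : pvec := (u.1 + v.1, u.2 + v.2).
Definition vsub (u v : pvec) : pvec := (u.1 - v.1, u.2 - v.2).
Definition vscale (e : 'F_2) (u : pvec) : pvec := (e *: u.1, e *: u.2).

Definition veq (n : nat) (u v : pvec) : Prop :=
  redp n u.1 = redp n v.1 /\ redp n u.2 = redp n v.2.

Definition cyc_span (n : nat) (g : pvec) (v : pvec) : Prop :=
  exists c : 'I_n -> 'F_2,
    veq n v (\sum_(i < n) c i *: ('X^i * g.1), \sum_(i < n) c i *: ('X^i * g.2)).

Definition SX (n : nat) (a b : {poly 'F_2}) : pvec -> Prop := cyc_span n (a, b).
Definition SZ (n : nat) (a b : {poly 'F_2}) : pvec -> Prop :=
  cyc_span n (xinv n b, xinv n a).

Definition dot (n : nat) (u v : pvec) : 'F_2 :=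
  \sum_(i < n) (redp n u.1)`_i * (redp n v.1)`_i
  + \sum_(i < n) (redp n u.2)`_i * (redp n v.2)`_i.

Definition perp (n : nat) (S : pvec -> Prop) (v : pvec) : Prop :=
  forall w, S w -> dot n v w = 0.

(* (x1,x2 ; z1,z2) is a basis of logical operators of the CSS code (SX,SZ):
   logical X's commute with Z-stabilizers, logical Z's with X-stabilizers,
   they are symplectically paired, and they generate all logical operators
   modulo stabilizers. *)
Definition logical_basis (n : nat) (sx sz : pvec -> Prop) (x1 x2 z1 z2 : pvec) : Prop :=
  perp n sz x1 /\ perp n sz x2 /\ perp n sx z1 /\ perp n sx z2 /\
  dot n x1 z1 = 1 /\ dot n x1 z2 = 0 /\ dot n x2 z1 = 0 /\ dot n x2 z2 = 1 /\
  (forall v, perp n sz v -> exists e1 e2 : 'F_2,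
      sx (vsub v (vadd (vscale e1 x1) (vscale e2 x2)))) /\
  (forall v, perp n sx v -> exists e1 e2 : 'F_2,
      sz (vsub v (vadd (vscale e1 z1) (vscale e2 z2)))).

Definition Oact (n d : nat) (v : pvec) : pvec :=
  (redp n ('X * subst_pow n d v.2), subst_pow n d v.1).

From Pilot Require Import Defs.
From HB Require Import structures.
From mathcomp Require Import all_boot all_algebra.
From mathcomp Require Import ring zify.
Import GRing.Theory.
Local Open Scope ring_scope.

Set Implicit Arguments. Unset Strict Implicit. Unset Printing Implicit Defensive.

(* The dot product of u
   and w is the constant coefficient of u1 w1(x^-1) + u2 w2(x^-1), so v is
   orthogonal to the cyclic span of (g1, g2) iff v1 g1(x^-1) + v2 g2(x^-1) = 0.
   As n is odd, the annihilator of x - 1 is spanned by the all-ones vector J,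
   hence the stabilizers of GB(1 + x, 1 + x^d) are exactly the vectors
   orthogonal to the other stabilizer space whose two halves have even weight.
   Since d^2 = -1 mod n, the ring endomorphism x |-> x^d sends 1 + x to 1 + x^d
   and 1 + x^d to x^-1 (1 + x); this makes O preserve both orthogonality
   conditions, while it swaps the parities of the two halves. The action of O
   on the logical basis (0, J), (1, c), (c(x^-1), 1), (J, 0), with
   c = 1 + x + ... + x^(d-1), is then read off from these parities alone. *)

Definition Xn1 (n : nat) : {poly 'F_2} := 'X^n - 1.

Notation cls n := (in_qpoly (Xn1 n)).

Lemma pchar2_poly : 2%N \in [pchar {poly 'F_2}].
Proof. by rewrite pchar_poly (pchar_Fp (isT : prime 2)). Qed.

Lemma pchar2_cls n : 2%N \in [pchar {poly %/ Xn1 n}].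
Proof. by rewrite pchar_qpoly (pchar_Fp (isT : prime 2)). Qed.

Lemma natr_F2 k : (k%:R : 'F_2) = (odd k)%:R.
Proof.
rewrite -{1}(odd_double_half k) natrD -muln2 natrM.
by rewrite (pchar_Fp_0 (isT : prime 2)) mulr0 addr0.
Qed.

Lemma poly_as_sum (R : nzSemiRingType) m (p : {poly R}) : (size p <= m)%N ->
  p = \sum_(i < m) p`_i *: 'X^i.
Proof.
move=> le_p_m; rewrite -poly_def; apply/polyP => i; rewrite coef_poly.
by case: ltnP => // le_m_i; rewrite nth_default // (leq_trans le_p_m).
Qed.

Definition ones m : {poly 'F_2} := \poly_(i < m) 1.

Lemma Xn1_ones m : Xn1 m = ('X - 1) * ones m.
Proof.
rewrite /Xn1 subrX1 /ones poly_def.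
by congr (_ * _); apply: eq_bigr => i _; rewrite scale1r.
Qed.

Lemma horner1_ones m : (ones m).[1] = (odd m)%:R.
Proof.
rewrite horner_poly; under eq_bigr do rewrite expr1n mulr1.
by rewrite sumr_const card_ord natr_F2.
Qed.

Lemma coef0_ones m : (0 < m)%N -> (ones m)`_0 = 1.
Proof. by move=> m_gt0; rewrite coef_poly m_gt0. Qed.

Lemma Xsub1_F2 : ('X - 1 : {poly 'F_2}) = 1 + 'X.
Proof. by rewrite addrC (oppr_pchar2 pchar2_poly). Qed.

Lemma horner1_1pX e : (1 + 'X^e : {poly 'F_2}).[1] = 0.
Proof. by rewrite hornerD hornerC hornerXn expr1n; apply/eqP. Qed.

Lemma add1Xn_ones m : 1 + 'X^m = (1 + 'X) * ones m.
Proof. by rewrite -Xsub1_F2 -Xn1_ones /Xn1 (GRing.subr_pchar2 pchar2_poly) addrC. Qed.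

Lemma sqr_pred_modn n : (0 < n)%N -> (n.-1 * n.-1 = 1 %[mod n])%N.
Proof.
case: n => [|[|m]] // _ /=.
by rewrite (_ : m.+1 * m.+1 = m * m.+2 + 1)%N ?modnMDl //; nia.
Qed.

Section CyclicQuotient.

Variable n : nat.
Hypothesis n_gt0 : (0 < n)%N.
Implicit Types (p q r : {poly 'F_2}) (g u v w z : pvec).

Local Notation x := (cls n 'X).

Lemma size_Xn1 : size (Xn1 n) = n.+1.
Proof. by rewrite /Xn1 -polyC1 size_XnsubC. Qed.

Lemma val_cls p : val (cls n p) = redp n p.
Proof.
have monic_Xn1 : Xn1 n \is monic by rewrite /Xn1 -polyC1 monicXnsubC.
rewrite /in_qpoly /= /mk_monic size_Xn1 monic_Xn1 /redp.
by rewrite ltnS n_gt0 Pdiv.IdomainMonic.modpE.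
Qed.

Lemma cls_redp p : cls n (redp n p) = cls n p.
Proof. by apply: val_inj; rewrite !val_cls /redp modp_id. Qed.

Lemma redp_cls p q : cls n p = cls n q -> redp n p = redp n q.
Proof. by rewrite -!val_cls => ->. Qed.

Lemma cls_eq0 p : (cls n p == 0) = (Xn1 n %| p).
Proof. by rewrite -val_eqE val_cls /redp; apply/eqP/modp_eq0P. Qed.

Lemma cls_Xn1 : cls n (Xn1 n) = 0.
Proof. by apply/eqP; rewrite cls_eq0 dvdpp. Qed.

Lemma clsXn : x ^+ n = 1.
Proof.
by apply/eqP; rewrite -subr_eq0; have := cls_Xn1; rewrite rmorphB rmorph1 rmorphXn => ->.
Qed.

Lemma clsX_modn e : x ^+ (e %% n) = x ^+ e.
Proof. exact: expr_mod clsXn. Qed.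

Lemma clsX_pred : x * x ^+ n.-1 = 1.
Proof. by rewrite -exprS prednK // clsXn. Qed.

Lemma horner1_cls p q : cls n p = cls n q -> p.[1] = q.[1].
Proof.
move=> /eqP; rewrite -subr_eq0 -rmorphB cls_eq0 => /dvdpP[g def_pq].
apply/eqP; rewrite -subr_eq0 -hornerN -hornerD def_pq hornerM /Xn1.
by rewrite hornerD hornerN hornerXn expr1n hornerC subrr mulr0.
Qed.

Lemma horner1_redp p : (redp n p).[1] = p.[1].
Proof. by apply: horner1_cls; rewrite cls_redp. Qed.

Lemma horner1_subst_pow k p : (subst_pow n k p).[1] = p.[1].
Proof. by rewrite horner1_redp horner_comp hornerXn expr1n. Qed.

Lemma cls_compX k p q : cls n p = cls n q -> cls n (p \Po 'X^k) = cls n (q \Po 'X^k).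
Proof.
move=> /eqP; rewrite -subr_eq0 -rmorphB cls_eq0 => /dvdpP[g def_pq].
apply/eqP; rewrite -subr_eq0 -!rmorphB /= def_pq rmorphM /= rmorphM /=.
by rewrite /Xn1 rmorphB /= comp_Xn_poly rmorph1 rmorphB /= -exprM !rmorphXn /=
  -clsX_modn modnMl expr0 rmorph1 subrr mulr0.
Qed.

Lemma cls_compX_modn k p : cls n (p \Po 'X^(k %% n)) = cls n (p \Po 'X^k).
Proof.
rewrite !comp_polyE !linear_sum; apply: eq_bigr => i _.
by rewrite !linearZ -!exprM !rmorphXn -[in RHS]clsX_modn -modnMml clsX_modn.
Qed.

Lemma cls_subst_pow k p : cls n (subst_pow n k p) = cls n (p \Po 'X^k).
Proof. exact: cls_redp. Qed.

Lemma cls_comp_subst_pow j k p :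
  cls n (subst_pow n j p \Po 'X^k) = cls n (p \Po 'X^(j * k)).
Proof.
by rewrite (cls_compX _ (cls_subst_pow _ _)) -comp_polyA comp_Xn_poly -exprM mulnC.
Qed.

Lemma cls_xinvK p : cls n (xinv n (xinv n p)) = cls n p.
Proof.
rewrite cls_subst_pow cls_comp_subst_pow -cls_compX_modn (sqr_pred_modn n_gt0).
by rewrite cls_compX_modn comp_polyXr.
Qed.

Lemma cls_1pX e : cls n (1 + 'X^e) = 1 + x ^+ e.
Proof. by rewrite in_qpolyD rmorph1 rmorphXn. Qed.

Lemma cls_comp_1pX k e : cls n ((1 + 'X^e) \Po 'X^k) = 1 + x ^+ (k * e).
Proof. by rewrite rmorphD rmorph1 /= comp_Xn_poly -exprM cls_1pX. Qed.

Lemma cls_xinv_1pX e : cls n (xinv n (1 + 'X^e)) = 1 + x ^+ (n.-1 * e).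
Proof. by rewrite cls_subst_pow cls_comp_1pX. Qed.

Lemma cls_compX_eq0 k p : cls n p = 0 -> cls n (p \Po 'X^k) = 0.
Proof. by move=> p0; rewrite (@cls_compX k p 0) ?p0 ?rmorph0 // comp_poly0 rmorph0. Qed.

Lemma cls_xinv1 : cls n (xinv n 1) = 1.
Proof. by rewrite cls_subst_pow !rmorph1. Qed.

Lemma xinv0 : xinv n 0 = 0.
Proof. by rewrite /xinv /subst_pow comp_poly0 /redp mod0p. Qed.

Lemma redp_small p : (size p <= n)%N -> redp n p = p.
Proof. by move=> le_p_n; rewrite /redp modp_small // size_Xn1. Qed.

Lemma size_redp p : (size (redp n p) <= n)%N.
Proof. by rewrite -ltnS -size_Xn1 ltn_modp -size_poly_gt0 size_Xn1. Qed.

Lemma redpD p q : redp n (p + q) = redp n p + redp n q.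
Proof. exact: modpD. Qed.

Lemma redpN p : redp n (- p) = - redp n p.
Proof. exact: modpN. Qed.

Lemma redpZ c p : redp n (c *: p) = c *: redp n p.
Proof. exact: modpZl. Qed.

Lemma redp_sum (I : Type) (r : seq I) (P : pred I) (F : I -> {poly 'F_2}) :
  redp n (\sum_(i <- r | P i) F i) = \sum_(i <- r | P i) redp n (F i).
Proof. exact: (big_morph _ redpD (mod0p _)). Qed.

Lemma redpX e : redp n 'X^e = 'X^(e %% n).
Proof.
rewrite -[RHS]redp_small ?size_polyXn ?ltn_mod //.
by apply: redp_cls; rewrite !rmorphXn clsX_modn.
Qed.

Lemma cls_xinv_redp p : cls n (xinv n p) = cls n (redp n p \Po 'X^(n.-1)).
Proof. by rewrite cls_subst_pow (cls_compX _ (cls_redp p)). Qed.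

Lemma cls_xinvM p q : cls n (xinv n (p * q)) = cls n (xinv n p) * cls n (xinv n q).
Proof. by rewrite !cls_subst_pow -rmorphM -rmorphM. Qed.

Lemma cls_xinv_eq p q : cls n p = cls n q -> cls n (xinv n p) = cls n (xinv n q).
Proof. by move=> eq_pq; rewrite !cls_subst_pow (cls_compX _ eq_pq). Qed.

Lemma modn_pred_mulDn_eq0 i k : (i < n)%N -> (k < n)%N ->
  ((n.-1 * k + i) %% n == 0)%N = (i == k).
Proof.
move=> lt_i_n lt_k_n; rewrite -[0%N](mod0n n) -(eqn_modDr k) add0n.
by rewrite (_ : n.-1 * k + i + k = k * n + i)%N ?modnMDl ?modn_small //; nia.
Qed.

Lemma coef_redp_xinv r k : (k < n)%N ->
  (redp n r)`_k = (redp n (xinv n 'X^k * r))`_0.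
Proof.
(* x^-k = x^((n-1)k) rotates the coefficient of x^k to position 0. *)
move=> lt_k_n; set P := redp n r.
have P_sum : P = \sum_(i < n) P`_i *: 'X^i := poly_as_sum (size_redp r).
have -> : redp n (xinv n 'X^k * r) =
          redp n (\sum_(i < n) P`_i *: 'X^(n.-1 * k + i)).
  apply: redp_cls; rewrite rmorphM /= cls_subst_pow -(cls_redp r) -/P -rmorphM.
  rewrite {1}P_sum mulr_sumr comp_Xn_poly.
  by congr (cls n _); apply: eq_bigr => i _; rewrite -scalerAr -exprM -exprD.
rewrite redp_sum coef_sum (bigD1 (Ordinal lt_k_n)) //= big1 => [|i ne_ik].
  by rewrite redpZ redpX coefZ coefXn eq_sym modn_pred_mulDn_eq0 // eqxx mulr1 addr0.
rewrite redpZ redpX coefZ coefXn eq_sym modn_pred_mulDn_eq0 //.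
by rewrite (_ : (i == k :> nat) = false) ?mulr0 //; exact: negbTE ne_ik.
Qed.

Lemma sum_coef_redp p q :
  \sum_(i < n) (redp n p)`_i * (redp n q)`_i = (redp n (p * xinv n q))`_0.
Proof.
set Q := redp n q.
have Q_sum : Q = \sum_(i < n) Q`_i *: 'X^i := poly_as_sum (size_redp q).
transitivity ((redp n (\sum_(i < n) Q`_i *: (xinv n 'X^i * p)))`_0).
  rewrite redp_sum coef_sum; apply: eq_bigr => i _.
  by rewrite redpZ coefZ (coef_redp_xinv p (ltn_ord i)) mulrC.
apply: (congr1 (fun s : {poly 'F_2} => s`_0)); apply: redp_cls.
rewrite rmorphM /= cls_xinv_redp -/Q.
rewrite {2}Q_sum !linear_sum mulr_sumr; apply: eq_bigr => i _.
by rewrite !linearZ /= rmorphM /= cls_subst_pow -scalerAr mulrC.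
Qed.

Lemma dot_coef0 u w :
  dot n u w = (redp n (u.1 * xinv n w.1 + u.2 * xinv n w.2))`_0.
Proof. by rewrite /dot !sum_coef_redp redpD coefD. Qed.

Lemma dot_sym u w : dot n u w = dot n w u.
Proof. by rewrite /dot; congr (_ + _); apply: eq_bigr => i _; rewrite mulrC. Qed.

Lemma dotDl u w z : dot n (vadd u w) z = dot n u z + dot n w z.
Proof. by rewrite !dot_coef0 -coefD -redpD /=; congr ((redp n _)`_0); ring. Qed.

Lemma dotBl u w z : dot n (vsub u w) z = dot n u z - dot n w z.
Proof. by rewrite !dot_coef0 -coefB -redpN -redpD /=; congr ((redp n _)`_0); ring. Qed.

Lemma dotZl e u w : dot n (vscale e u) w = e * dot n u w.
Proof.
by rewrite !dot_coef0 -coefZ -redpZ /= scalerDr -!scalerAl.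
Qed.

Lemma perpD S u w : perp n S u -> perp n S w -> perp n S (vadd u w).
Proof. by move=> perp_u perp_w z Sz; rewrite dotDl perp_u ?perp_w ?addr0. Qed.

Lemma perpB S u w : perp n S u -> perp n S w -> perp n S (vsub u w).
Proof. by move=> perp_u perp_w z Sz; rewrite dotBl perp_u ?perp_w ?subr0. Qed.

Lemma perpZ S e u : perp n S u -> perp n S (vscale e u).
Proof. by move=> perp_u z Sz; rewrite dotZl perp_u ?mulr0. Qed.

Lemma dot_eq_coef0 u w p : (size p <= n)%N ->
  cls n (u.1 * xinv n w.1 + u.2 * xinv n w.2) = cls n p -> dot n u w = p`_0.
Proof. by move=> le_p_n /redp_cls eq_up; rewrite dot_coef0 eq_up redp_small. Qed.

Lemma cyc_span_swap (g1 g2 v1 v2 : {poly 'F_2}) :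
  cyc_span n (g1, g2) (v1, v2) <-> cyc_span n (g2, g1) (v2, v1).
Proof. by split=> -[c [eq1 eq2]]; exists c. Qed.

Lemma cyc_spanE g v : cyc_span n g v <->
  exists f, cls n v.1 = cls n f * cls n g.1 /\ cls n v.2 = cls n f * cls n g.2.
Proof.
have sum_mul c (h : {poly 'F_2}) :
    \sum_(i < n) c i *: ('X^i * h) = (\sum_(i < n) c i *: 'X^i) * h.
  by rewrite mulr_suml; apply: eq_bigr => i _; rewrite scalerAl.
split=> [[c [eq1 eq2]] | [f [eq1 eq2]]].
  exists (\sum_(i < n) c i *: 'X^i).
  by rewrite -!rmorphM -!sum_mul -(cls_redp v.1) -(cls_redp v.2) eq1 eq2 /= !cls_redp.
exists (fun i => (redp n f)`_i); split; apply: redp_cls;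
  by rewrite /= sum_mul -(poly_as_sum (size_redp f)) rmorphM /= cls_redp.
Qed.

Lemma dot_cyc_mul v w f g :
  cls n w.1 = cls n f * cls n g.1 -> cls n w.2 = cls n f * cls n g.2 ->
  dot n v w = (redp n (xinv n f * (v.1 * xinv n g.1 + v.2 * xinv n g.2)))`_0.
Proof.
rewrite -!rmorphM => /cls_xinv_eq eq1 /cls_xinv_eq eq2; rewrite dot_coef0.
apply: (congr1 (fun s : {poly 'F_2} => s`_0)); apply: redp_cls.
by rewrite !(rmorphD, rmorphM) /= eq1 eq2 !cls_xinvM; ring.
Qed.

Lemma perp_cyc_spanE g v : perp n (cyc_span n g) v <->
  cls n (v.1 * xinv n g.1 + v.2 * xinv n g.2) = 0.
Proof.
set R := v.1 * xinv n g.1 + v.2 * xinv n g.2.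
split=> [perp_v | R0 w /cyc_spanE[f [eq1 eq2]]]; last first.
  rewrite (dot_cyc_mul _ eq1 eq2) -/R -val_cls in_qpolyM R0 mulr0.
  by rewrite -(in_qpoly0 (Xn1 n)) val_cls /redp mod0p coef0.
suff R0 : redp n R = 0 by rewrite -cls_redp R0 rmorph0.
apply/polyP => k; rewrite coef0; have [lt_k_n | le_n_k] := ltnP k n; last first.
  by rewrite nth_default // (leq_trans (size_redp R)).
rewrite coef_redp_xinv // -(@dot_cyc_mul v ('X^k * g.1, 'X^k * g.2)) ?rmorphM //.
by apply: perp_v; apply/cyc_spanE; exists 'X^k; rewrite !rmorphM.
Qed.

Hypothesis n_odd : odd n.

Lemma cls_mulXsub1_eq0 r :
  cls n (('X - 1) * r) = 0 -> cls n r = r.[1] *: cls n (ones n).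
Proof.
have Xsub1_neq0 : ('X - 1 : {poly 'F_2}) != 0 by rewrite -polyC1 polyXsubC_eq0.
move=> /eqP; rewrite cls_eq0 Xn1_ones dvdp_mul2l // => /dvdpP[g ->].
have /factor_theorem[h def_g] : root (g - g.[1]%:P) 1.
  by rewrite /root hornerD hornerN hornerC subrr.
apply/eqP; rewrite hornerM horner1_ones n_odd mulr1 -in_qpolyZ -subr_eq0.
rewrite -rmorphB /= -mul_polyC -mulrBl def_g polyC1 -mulrA -Xn1_ones.
by rewrite in_qpolyM cls_Xn1 mulr0.
Qed.

Lemma cyc_span_kerE g (w : {poly 'F_2}) v :
  cls n g.1 * cls n w = cls n ('X - 1) -> g.1.[1] = 0 -> g.2.[1] = 0 ->
  cyc_span n g v <->
  [/\ cls n (v.1 * g.2 + v.2 * g.1) = 0, v.1.[1] = 0 & v.2.[1] = 0].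
Proof.
move=> gw g1_1 g2_1; rewrite cyc_spanE.
split=> [[f [eq1 eq2]] | [syn0 v1_1 v2_1]].
  split.
  - rewrite in_qpolyD !in_qpolyM eq1 eq2 mulrAC -mulrA (mulrC (cls n g.2)).
    exact: addrr_pchar2 (pchar2_cls n) _.
  - by rewrite (@horner1_cls _ (f * g.1)) ?in_qpolyM // hornerM g1_1 mulr0.
  - by rewrite (@horner1_cls _ (f * g.2)) ?in_qpolyM // hornerM g2_1 mulr0.
(* v1 = h (x - 1) = h w g1, and r := v2 - h w g2 is killed by x - 1, hence is a
   multiple of J; its parity is 0, so r = 0. *)
have /factor_theorem[h def_v1] : root v.1 1 by rewrite /root v1_1.
rewrite polyC1 in def_v1.
have eq1 : cls n v.1 = cls n (h * w) * cls n g.1.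
  by rewrite def_v1 !in_qpolyM -gw; ring.
exists (h * w); split => //.
set r := v.2 - h * w * g.2.
have r_ker : cls n (('X - 1) * r) = 0.
  move: syn0; rewrite in_qpolyD !in_qpolyM => syn0.
  rewrite -gw /r rmorphB /= !in_qpolyM (GRing.subr_pchar2 (pchar2_cls n)).
  transitivity (cls n w * (cls n v.1 * cls n g.2 + cls n v.2 * cls n g.1)).
    by rewrite eq1 in_qpolyM; ring.
  by rewrite syn0 mulr0.
have r_1 : r.[1] = 0 by rewrite /r hornerD hornerN hornerM g2_1 v2_1 mulr0 subrr.
move: (cls_mulXsub1_eq0 r_ker); rewrite r_1 scale0r => /eqP.
by rewrite /r rmorphB /= subr_eq0 in_qpolyM => /eqP.
Qed.

End CyclicQuotient.

Section GeneralizedBicycle.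

Variables n d : nat.
Hypotheses (n_gt0 : (0 < n)%N) (n_odd : odd n) (d_odd : odd d).
Hypothesis d_sq : (d * d = n.-1 %[mod n])%N.
Implicit Types (p : {poly 'F_2}) (u v w : pvec).

Local Notation a := (1 + 'X : {poly 'F_2}).
Local Notation b := (1 + 'X^d : {poly 'F_2}).
Local Notation SX := (SX n a b).
Local Notation SZ := (SZ n a b).
Local Notation x := (cls n 'X).

Lemma cls_a : cls n a = 1 + x.
Proof. by rewrite in_qpolyD rmorph1. Qed.

Lemma cls_comp_a k : cls n (a \Po 'X^k) = 1 + x ^+ k.
Proof. by have := @cls_comp_1pX n k 1; rewrite muln1. Qed.

Lemma cls_xinv_a : cls n (xinv n a) = 1 + x ^+ n.-1.
Proof. by rewrite (cls_subst_pow n_gt0) cls_comp_a. Qed.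

Lemma perp_SZE v : perp n SZ v <-> cls n (v.1 * b + v.2 * a) = 0.
Proof.
rewrite perp_cyc_spanE //= in_qpolyD !in_qpolyM !cls_xinvK //.
by rewrite -!in_qpolyM -in_qpolyD.
Qed.

Lemma perp_SXE v : perp n SX v <-> cls n (v.1 * xinv n a + v.2 * xinv n b) = 0.
Proof. exact: perp_cyc_spanE. Qed.

Lemma SXE v : SX v <-> [/\ perp n SZ v, v.1.[1] = 0 & v.2.[1] = 0].
Proof.
rewrite /Defs.SX (@cyc_span_kerE _ n_gt0 n_odd _ 1) /=.
- by split=> -[syn0 v1_1 v2_1]; split=> //; apply/perp_SZE.
- by rewrite rmorph1 mulr1 Xsub1_F2.
- exact: (horner1_1pX 1).
- exact: horner1_1pX.
Qed.

Lemma SZE v : SZ v <-> [/\ perp n SX v, v.1.[1] = 0 & v.2.[1] = 0].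
Proof.
(* After swapping halves the generator starts with a(x^-1) = x^-1 (x - 1). *)
case: v => v1 v2.
rewrite /Defs.SZ cyc_span_swap (@cyc_span_kerE _ n_gt0 n_odd _ 'X) /=.
- split=> -[syn0 v2_1 v1_1]; split=> //.
    by apply/(perp_SXE (v1, v2)); rewrite addrC.
  by move/(perp_SXE (v1, v2)): syn0; rewrite addrC.
- rewrite cls_xinv_a mulrDl mul1r mulrC clsX_pred //.
  by rewrite Xsub1_F2 rmorphD rmorph1 addrC.
- by rewrite horner1_subst_pow //; exact: (horner1_1pX 1).
- by rewrite horner1_subst_pow // horner1_1pX.
Qed.

Lemma horner1_Oact1 v : (Oact n d v).1.[1] = v.2.[1].
Proof. by rewrite /Oact /= horner1_redp // hornerM hornerX mul1r horner1_subst_pow. Qed.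

Lemma horner1_Oact2 v : (Oact n d v).2.[1] = v.1.[1].
Proof. exact: horner1_subst_pow. Qed.

Lemma cls_Oact1 v : cls n (Oact n d v).1 = x * cls n (v.2 \Po 'X^d).
Proof. by rewrite /Oact /= cls_redp // in_qpolyM cls_subst_pow. Qed.

Lemma cls_Oact2 v : cls n (Oact n d v).2 = cls n (v.1 \Po 'X^d).
Proof. exact: cls_subst_pow. Qed.

Lemma perp_SZ_Oact v : perp n SZ v -> perp n SZ (Oact n d v).
Proof.
move=> /perp_SZE /(cls_compX_eq0 n_gt0 d).
rewrite rmorphD !rmorphM /= in_qpolyD !in_qpolyM.
rewrite cls_comp_1pX cls_comp_a -clsX_modn // d_sq clsX_modn // => syn_d.
apply/perp_SZE; rewrite in_qpolyD !in_qpolyM cls_Oact1 cls_Oact2 cls_1pX cls_a.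
set s1 := cls n (v.1 \Po 'X^d) in syn_d *.
set s2 := cls n (v.2 \Po 'X^d) in syn_d *.
rewrite -(mulr0 x) -syn_d.
rewrite [RHS](_ : _ = x * s2 * (1 + x ^+ d) + s1 * (x + x * x ^+ n.-1)); last by ring.
by rewrite clsX_pred //; ring.
Qed.

Lemma perp_SX_Oact v : perp n SX v -> perp n SX (Oact n d v).
Proof.
have expX_pred_dd : x ^+ (n.-1 * d * d) = x.
  rewrite -mulnA -clsX_modn // -modnMmr d_sq modnMmr (sqr_pred_modn n_gt0).
  by rewrite clsX_modn.
move=> /perp_SXE /(cls_compX_eq0 n_gt0 d).
rewrite rmorphD !rmorphM /= in_qpolyD !in_qpolyM.
rewrite !cls_comp_subst_pow // cls_comp_a cls_comp_1pX expX_pred_dd => syn_d.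
apply/perp_SXE.
rewrite in_qpolyD !in_qpolyM cls_Oact1 cls_Oact2 cls_xinv_a cls_xinv_1pX //.
set s1 := cls n (v.1 \Po 'X^d) in syn_d *.
set s2 := cls n (v.2 \Po 'X^d) in syn_d *.
rewrite -syn_d (_ : x * s2 * _ = s2 * (x + x * x ^+ n.-1)); last by ring.
by rewrite clsX_pred //; ring.
Qed.

Lemma SX_Oact v : SX v -> SX (Oact n d v).
Proof.
case/SXE=> perp_v v1_1 v2_1; apply/SXE.
by rewrite horner1_Oact1 horner1_Oact2; split=> //; apply: perp_SZ_Oact.
Qed.

Lemma SZ_Oact v : SZ v -> SZ (Oact n d v).
Proof.
case/SZE=> perp_v v1_1 v2_1; apply/SZE.
by rewrite horner1_Oact1 horner1_Oact2; split=> //; apply: perp_SX_Oact.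
Qed.

Lemma SX_vsub u w : perp n SZ u -> perp n SZ w ->
  u.1.[1] = w.1.[1] -> u.2.[1] = w.2.[1] -> SX (vsub u w).
Proof.
move=> perp_u perp_w eq1 eq2; apply/SXE.
by rewrite /= !hornerD !hornerN eq1 eq2 !subrr; split=> //; apply: perpB.
Qed.

Lemma SZ_vsub u w : perp n SX u -> perp n SX w ->
  u.1.[1] = w.1.[1] -> u.2.[1] = w.2.[1] -> SZ (vsub u w).
Proof.
move=> perp_u perp_w eq1 eq2; apply/SZE.
by rewrite /= !hornerD !hornerN eq1 eq2 !subrr; split=> //; apply: perpB.
Qed.

Definition lx1 : pvec := (0, ones n).
Definition lx2 : pvec := (1, ones d).
Definition lz1 : pvec := (xinv n (ones d), 1).
Definition lz2 : pvec := (ones n, 0).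

Lemma horner1_ones_n : (ones n).[1] = 1.
Proof. by rewrite horner1_ones n_odd. Qed.

Lemma horner1_ones_d : (ones d).[1] = 1.
Proof. by rewrite horner1_ones d_odd. Qed.

Lemma cls_ones_a : cls n (ones n) * (1 + x) = 0.
Proof. by rewrite -cls_a -in_qpolyM mulrC -Xsub1_F2 -Xn1_ones cls_Xn1. Qed.

Lemma perp_SZ_lx1 : perp n SZ lx1.
Proof. by apply/perp_SZE; rewrite /= mul0r add0r in_qpolyM cls_a cls_ones_a. Qed.

Lemma perp_SZ_lx2 : perp n SZ lx2.
Proof.
apply/perp_SZE; rewrite /= mul1r add1Xn_ones mulrC.
by rewrite (addrr_pchar2 pchar2_poly) rmorph0.
Qed.

Lemma perp_SX_lz1 : perp n SX lz1.
Proof.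
apply/perp_SXE; rewrite /= mul1r in_qpolyD in_qpolyM -cls_xinvM // mulrC -add1Xn_ones.
exact: addrr_pchar2 (pchar2_cls n) _.
Qed.

Lemma perp_SX_lz2 : perp n SX lz2.
Proof.
apply/perp_SXE; rewrite /= mul0r addr0 in_qpolyM cls_xinv_a.
transitivity (cls n (ones n) * (1 + x) * x ^+ n.-1); last by rewrite cls_ones_a mul0r.
by rewrite -mulrA mulrDl mul1r clsX_pred // addrC.
Qed.

Lemma logical_basis_ones : logical_basis n SX SZ lx1 lx2 lz1 lz2.
Proof.
have ones_n_small : (size (ones n) <= n)%N by apply: size_poly.
refine (conj perp_SZ_lx1 (conj perp_SZ_lx2 (conj perp_SX_lz1 (conj perp_SX_lz2
         (conj _ (conj _ (conj _ (conj _ (conj _ _))))))))).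
- rewrite (@dot_eq_coef0 _ n_gt0 _ _ (ones n)) ?coef0_ones //.
  by rewrite /= mul0r add0r in_qpolyM cls_xinv1 // mulr1.
- rewrite (@dot_eq_coef0 _ n_gt0 _ _ 0) ?coef0 ?size_poly0 //.
  by rewrite /= xinv0 mul0r mulr0 addr0.
- rewrite (@dot_eq_coef0 _ n_gt0 _ _ 0) ?coef0 ?size_poly0 //.
  rewrite /= in_qpolyD !in_qpolyM in_qpoly1 cls_xinvK // cls_xinv1 // mul1r mulr1.
  by rewrite (addrr_pchar2 (pchar2_cls n)) rmorph0.
- rewrite dot_sym (@dot_eq_coef0 _ n_gt0 _ _ (ones n)) ?coef0_ones //.
  by rewrite /= mul0r addr0 in_qpolyM cls_xinv1 // mulr1.
- move=> v perp_v; exists (v.2.[1] - v.1.[1]), v.1.[1].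
  apply: SX_vsub => //; first by apply: (perpD n_gt0); apply: (perpZ n_gt0);
    [apply: perp_SZ_lx1 | apply: perp_SZ_lx2].
  + by rewrite /= hornerD !hornerZ !hornerC; ring.
  + by rewrite /= hornerD !hornerZ horner1_ones_n horner1_ones_d; ring.
- move=> v perp_v; exists v.2.[1], (v.1.[1] - v.2.[1]).
  apply: SZ_vsub => //; first by apply: (perpD n_gt0); apply: (perpZ n_gt0);
    [apply: perp_SX_lz1 | apply: perp_SX_lz2].
  + rewrite /= hornerD !hornerZ horner1_subst_pow //.
    by rewrite horner1_ones_d horner1_ones_n; ring.
  + by rewrite /= hornerD !hornerZ !hornerC; ring.
Qed.

Lemma Oact_cnot :
  [/\ SX (vsub (Oact n d lx1) (vadd lx1 lx2)), SX (vsub (Oact n d lx2) lx2),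
      SZ (vsub (Oact n d lz1) lz1) & SZ (vsub (Oact n d lz2) (vadd lz1 lz2))].
Proof.
have px1 := perp_SZ_lx1; have px2 := perp_SZ_lx2.
have pz1 := perp_SX_lz1; have pz2 := perp_SX_lz2.
split; [apply: SX_vsub | apply: SX_vsub | apply: SZ_vsub | apply: SZ_vsub];
  rewrite ?horner1_Oact1 ?horner1_Oact2 /= ?hornerD ?hornerC
    ?horner1_ones_n ?horner1_ones_d ?horner1_subst_pow ?horner1_ones_d.
all: by [ | apply: perp_SZ_Oact | apply: perp_SX_Oact | apply: (perpD n_gt0)
          | apply/eqP].
Qed.

End GeneralizedBicycle.

Lemma half_sqS_odd_def d : odd d ->
  ((d ^ 2).+1)./2 = (d./2 * d./2.+1).*2.+1.
Proof.
move=> d_odd; rewrite -[in LHS](odd_double_half d) d_odd.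
by rewrite (_ : _.+1 = ((d./2 * d./2.+1).*2.+1).*2) ?doubleK //; nia.
Qed.

Lemma odd_half_sqS d : odd d -> odd ((d ^ 2).+1)./2.
Proof. by move/half_sqS_odd_def->; rewrite /= odd_double. Qed.

Lemma sqr_modn_half_sqS d : odd d ->
  let n := ((d ^ 2).+1)./2 in (d * d = n.-1 %[mod n])%N.
Proof.
move=> d_odd n; rewrite (_ : d * d = n.-1 + n)%N ?modnDr // /n half_sqS_odd_def //.
by rewrite -[in LHS](odd_double_half d) d_odd; nia.
Qed.

Unset Implicit Arguments.

Theorem theorem6 (d : nat) :
  (3 <= d)%N -> odd d ->
  let n := ((d ^ 2).+1)./2 in
  let a : {poly 'F_2} := 1 + 'X in
  let b : {poly 'F_2} := 1 + 'X^d in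
  (* O is an automorphism of the code: it maps stabilizers to stabilizers *)
  (forall v, SX n a b v -> SX n a b (Oact n d v)) /\
  (forall v, SZ n a b v -> SZ n a b (Oact n d v)) /\
  (* and acts on a suitable logical basis as CNOT (control 1, target 2) *)
  exists x1 x2 z1 z2 : pvec,
    logical_basis n (SX n a b) (SZ n a b) x1 x2 z1 z2 /\
    SX n a b (vsub (Oact n d x1) (vadd x1 x2)) /\
    SX n a b (vsub (Oact n d x2) x2) /\
    SZ n a b (vsub (Oact n d z1) z1) /\
    SZ n a b (vsub (Oact n d z2) (vadd z1 z2)).
Proof.
move=> _ d_odd n a b.
have n_odd : odd n := odd_half_sqS d_odd.
have n_gt0 : (0 < n)%N := odd_gt0 n_odd.
have d_sq := sqr_modn_half_sqS d_odd.
split; first by move=> v; apply: SX_Oact.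
split; first by move=> v; apply: SZ_Oact.
exists (lx1 n), (lx2 d), (lz1 n d), (lz2 n).
have [cnot_x1 cnot_x2 cnot_z1 cnot_z2] := Oact_cnot n_gt0 n_odd d_odd d_sq.
by split; [apply: logical_basis_ones | do !split].
Qed.
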